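(* Let $a,b,c,d\geq 1$ be integers and $$M=\begin{pmatrix} a & b\\ c & d\end{pmatrix}.$$ Then $\mathrm{Cat}(M)\neq\emptyset$ in each of the following cases: (1) $a=b=c=d=1$; (2) $a=1$ and $d>bc$; (3) $d=1$ and $a>bc$; (4) $a>1$ and $d>1$. In all other cases $\mathrm{Cat}(M)=\emptyset$.
   Context: For an $n\times n$ matrix $M=(m_{ij})$ with entries in the natural numbers, $\mathrm{Cat}(M)$ denotes the collection of categories $A$ with exactly $n$ distinct objects $x_1,\dots,x_n$ such that $|A(x_i,x_j)|=m_{ij}$ for all $i,j$, where $A(x_i,x_j)$ is the set of morphisms from $x_i$ to $x_j$. *)

From mathcomp Require Import all_boot all_algebra.
Set Implicit Arguments. Unset Strict Implicit. Unset Printing Implicit Defensive.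

(* Composition is written in diagrammatic order: comp f g = g o f. *)
Record cat_on (n : nat) := CatOn {
  Hom : 'I_n -> 'I_n -> finType;
  idm : forall i, Hom i i;
  comp : forall i j k, Hom i j -> Hom j k -> Hom i k;
  comp_id_l : forall i j (f : Hom i j), comp (idm i) f = f;
  comp_id_r : forall i j (f : Hom i j), comp f (idm j) = f;
  comp_assoc : forall i j k l (f : Hom i j) (g : Hom j k) (h : Hom k l),
      comp (comp f g) h = comp f (comp g h)
}.

Definition Cat_nonempty (n : nat) (M : 'M[nat]_n) : Prop :=
  exists C : cat_on n, forall i j : 'I_n, #|Hom C i j| = M i j.

Definition mx2 (a b c d : nat) : 'M[nat]_2 :=
  \matrix_(i < 2, j < 2)
    if (i == 0 :> nat) then (if (j == 0 :> nat) then a else b)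
    else (if (j == 0 :> nat) then c else d).

From Pilot Require Import Defs.
From mathcomp Require Import all_boot all_algebra zify.
Set Implicit Arguments. Unset Strict Implicit. Unset Printing Implicit Defensive.

(* If x has only its identity endomorphism, then every round trip
   x -> y -> x is the identity, so (g, f) |-> f o g embeds Hom(y,x) * Hom(x,y)
   into End(y): bc <= d.  If bc = d, the identity of y factors through x, which
   forces End(y) to be trivial, hence bc = d = 1.  Conversely, when both
   endomorphism monoids have at least two elements, declare every composite of
   non-identities to be one fixed non-identity morphism; when a = 1 and bc < d,
   let End(y) consist of the identity, the bc composites y -> x -> y, and
   d - bc - 1 further morphisms composing like the composite of the first
   arrows; the case d = 1 is the mirror image. *)

(* Hom i j is realised as 'I_(M i j), with index 0 as the identity and [law]
   computing indices of composites. *)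
Lemma Cat_nonempty_of_law n (M : 'M[nat]_n) (law : 'I_n -> 'I_n -> 'I_n -> nat -> nat -> nat) :
  (forall i, 0 < M i i) ->
  (forall i j k f g, f < M i j -> g < M j k -> law i j k f g < M i k) ->
  (forall i j f, f < M i j -> law i i j 0 f = f) ->
  (forall i j f, f < M i j -> law i j j f 0 = f) ->
  (forall i j k l f g h, f < M i j -> g < M j k -> h < M k l ->
     law i k l (law i j k f g) h = law i j l f (law j k l g h)) ->
  Cat_nonempty M.
Proof.
move=> M_gt0 law_lt law1f lawf1 lawA.
pose idm i : 'I_(M i i) := Ordinal (M_gt0 i).
pose comp i j k (f : 'I_(M i j)) (g : 'I_(M j k)) : 'I_(M i k) :=
  Ordinal (law_lt i j k f g (ltn_ord f) (ltn_ord g)).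
have comp1f i j (f : 'I_(M i j)) : comp i i j (idm i) f = f by apply/val_inj/law1f.
have compf1 i j (f : 'I_(M i j)) : comp i j j f (idm j) = f by apply/val_inj/lawf1.
have compA i j k l f g h : comp i k l (comp i j k f g) h = comp i j l f (comp j k l g h).
  exact/val_inj/lawA.
by exists (CatOn comp1f compf1 compA) => i j /=; rewrite card_ord.
Qed.

Lemma Cat_nonempty_const1 n : Cat_nonempty (const_mx 1 : 'M[nat]_n).
Proof.
have M1 i j : (const_mx 1 : 'M[nat]_n) i j = 1 by rewrite mxE.
by apply: (@Cat_nonempty_of_law _ _ (fun _ _ _ _ _ => 0)) => [i|i j k f g _ _|i j f|i j f|];
  rewrite ?M1 // ltnS leqn0 => /eqP.
Qed.

Section AbsorbingLaw.
Variable n : nat.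
Implicit Types (i j k l : 'I_n) (f g h : nat).

Definition is_idm i j f := (i == j) && (f == 0).

(* Every composite of two non-identities is the morphism of index [i == k],
   which is never an identity. *)
Definition absorbing_law i j k f g : nat :=
  if is_idm i j f then g else if is_idm j k g then f else i == k.

Lemma is_idm_absorbing_law i j k f g :
  is_idm i k (absorbing_law i j k f g) = is_idm i j f && is_idm j k g.
Proof.
rewrite /absorbing_law; case: ifP => [/andP[/eqP -> _] //|nf] /=.
case: ifP => [/andP[/eqP ejk _]|_]; first by rewrite -ejk nf.
by rewrite /is_idm; case: eqP.
Qed.

Lemma absorbing_law1f i j f : absorbing_law i i j 0 f = f.
Proof. by rewrite /absorbing_law /is_idm !eqxx. Qed.

Lemma absorbing_lawf1 i j f : absorbing_law i j j f 0 = f.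
Proof.
by rewrite /absorbing_law /is_idm !eqxx andbT; case: ifP => // /andP[_ /eqP ->].
Qed.

Lemma absorbing_lawA i j k l f g h :
  absorbing_law i k l (absorbing_law i j k f g) h =
  absorbing_law i j l f (absorbing_law j k l g h).
Proof.
have [/andP[/eqP <- /eqP ->]|nf] := boolP (is_idm i j f).
  by rewrite !absorbing_law1f.
have [/andP[/eqP <- /eqP ->]|ng] := boolP (is_idm j k g).
  by rewrite absorbing_law1f absorbing_lawf1.
rewrite {1 3}/absorbing_law !is_idm_absorbing_law (negbTE nf) (negbTE ng) /=.
case: ifP => // /andP[/eqP <- _].
by rewrite /absorbing_law (negbTE nf) (negbTE ng).
Qed.

End AbsorbingLaw.

Lemma Cat_nonempty_absorbing n (M : 'M[nat]_n) :
  (forall i, 1 < M i i) -> (forall i j, 0 < M i j) -> Cat_nonempty M.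
Proof.
move=> M_gt1 M_gt0; apply: (@Cat_nonempty_of_law _ _ (@absorbing_law n)).
- by move=> i; apply: ltnW.
- move=> i j k f g Mf Mg; rewrite /absorbing_law /is_idm.
  case: ifP => [/andP[/eqP -> _] //|_]; case: ifP => [/andP[/eqP <- _] //|_].
  by case: (eqVneq i k) => [<-|].
- by move=> *; apply: absorbing_law1f.
- by move=> *; apply: absorbing_lawf1.
- by move=> *; apply: absorbing_lawA.
Qed.

Lemma Cat_nonempty_relabel m n (M : 'M[nat]_n) (s : 'I_m -> 'I_n) :
  Cat_nonempty M -> Cat_nonempty (\matrix_(i, j) M (s i) (s j)).
Proof.
case=> C HC.
exists (@CatOn m (fun i j => Defs.Hom C (s i) (s j)) (fun i => Defs.idm C (s i))
   (fun i j k f g => Defs.comp f g) (fun i j f => comp_id_l f) (fun i j f => comp_id_r f)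
   (fun i j k l f g h => comp_assoc f g h)) => i j /=.
by rewrite mxE HC.
Qed.

Section TrivialEndomorphisms.
Variables (n : nat) (C : cat_on n) (x y : 'I_n).
Hypothesis card_End_x : #|Defs.Hom C x x| = 1.

Lemma comp_round_trip (f : Defs.Hom C x y) (g : Defs.Hom C y x) :
  Defs.comp f g = Defs.idm C x.
Proof. by apply/fintype_le1P; rewrite card_End_x. Qed.

Lemma round_trip_inj :
  injective (fun p : Defs.Hom C y x * Defs.Hom C x y => Defs.comp p.1 p.2).
Proof.
move=> [g f] [g' f'] /= e.
have -> : g = g'.
  by rewrite -[g]comp_id_r -(comp_round_trip f g') -comp_assoc e comp_assoc
             comp_round_trip comp_id_r.
have -> // : f = f'.
by rewrite -[f]comp_id_l -(comp_round_trip f' g) comp_assoc e -comp_assoc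
           comp_round_trip comp_id_l.
Qed.

Lemma card_round_trips : #|Defs.Hom C y x| * #|Defs.Hom C x y| <= #|Defs.Hom C y y|.
Proof. by rewrite -card_prod; apply: leq_card round_trip_inj. Qed.

Lemma card_End_eq1_of_round_trips :
  #|Defs.Hom C y x| * #|Defs.Hom C x y| = #|Defs.Hom C y y| -> #|Defs.Hom C y y| = 1.
Proof.
rewrite -card_prod => card_eq.
have /codomP[[g f] /= id_gf] :
    Defs.idm C y \in codom (fun p : Defs.Hom C y x * Defs.Hom C x y => Defs.comp p.1 p.2).
  by apply: inj_card_onto round_trip_inj _ _; rewrite card_eq.
have End_y_idm (h : Defs.Hom C y y) : h = Defs.idm C y.
  rewrite -[h]comp_id_l -[h]comp_id_r id_gf comp_assoc -[Defs.comp f _]comp_assoc.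
  by rewrite -[Defs.comp (Defs.comp f h) _]comp_assoc comp_round_trip comp_id_l.
apply/eqP; rewrite eqn_leq; apply/andP; split.
  by apply/fintype_le1P => u v; rewrite (End_y_idm u) (End_y_idm v).
by apply/card_gt0P; exists (Defs.idm C y).
Qed.
End TrivialEndomorphisms.

Lemma mx2E a b c d (i j : 'I_2) : mx2 a b c d i j =
  match val i, val j with 0, 0 => a | 0, _ => b | _, 0 => c | _, _ => d end.
Proof. by rewrite mxE; case: i => [[|[|i]] Hi]; case: j => [[|[|j]] Hj]. Qed.

Section RectangularBand.
Variables b c : nat.
Hypotheses (b_gt0 : 0 < b) (c_gt0 : 0 < c).

(* Object 0 is x, with End(x) trivial, and object 1 is y.  The endomorphism
   [pair_code u v] of y is the composite of the u-th arrow y -> x with the v-th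
   arrow x -> y; the endomorphisms above [b * c] behave like [pair_code 0 0]. *)
Definition pair_code u v := (u * b + v).+1.
Definition code_fst e := if e <= b * c then e.-1 %/ b else 0.
Definition code_snd e := if e <= b * c then e.-1 %% b else 0.

Lemma pair_code_le u v : u < c -> v < b -> pair_code u v <= b * c.
Proof. by move=> *; rewrite /pair_code; nia. Qed.

Lemma pair_codeK1 u v : u < c -> v < b -> code_fst (pair_code u v) = u.
Proof.
by move=> u_lt v_lt; rewrite /code_fst pair_code_le //= divnMDl // divn_small ?addn0.
Qed.

Lemma pair_codeK2 u v : u < c -> v < b -> code_snd (pair_code u v) = v.
Proof. by move=> u_lt v_lt; rewrite /code_snd pair_code_le //= modnMDl modn_small. Qed.

Lemma code_fst_lt e : code_fst e < c.
Proof.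
rewrite /code_fst; case: ifP => // e_le.
by rewrite ltn_divLR // mulnC; case: e e_le => /=; nia.
Qed.

Lemma code_snd_lt e : code_snd e < b.
Proof. by rewrite /code_snd; case: ifP => // _; rewrite ltn_mod. Qed.

Definition band_law (i j k : 'I_2) (f g : nat) : nat :=
  match val i, val j, val k with
  | 0, 0, 0 => 0
  | 0, 0, _ => g
  | 0, _, 0 => 0
  | 0, _, _ => if g == 0 then f else code_snd g
  | _, 0, 0 => f
  | _, 0, _ => pair_code f g
  | _, _, 0 => if f == 0 then g else code_fst f
  | _, _, _ => if f == 0 then g else if g == 0 then f
               else pair_code (code_fst f) (code_snd g)
  end.

Variable d : nat.
Hypothesis bc_lt_d : b * c < d.
Let M := mx2 1 b c d.

Lemma band_law_lt i j k f g : f < M i j -> g < M j k -> band_law i j k f g < M i k.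
Proof.
have lt_d u v : u < c -> v < b -> pair_code u v < d.
  by move=> *; apply: leq_ltn_trans bc_lt_d; apply: pair_code_le.
case: i j k => [[|[|i]] Hi] // [[|[|j]] Hj] // [[|[|k]] Hk] //;
  rewrite !mx2E /band_law /= => Mf Mg;
  do ?case: eqP => // _; by rewrite ?lt_d ?code_fst_lt ?code_snd_lt.
Qed.

Lemma band_law1f i j f : f < M i j -> band_law i i j 0 f = f.
Proof. by case: i j f => [[|[|i]] Hi] // [[|[|j]] Hj] // [|f]; rewrite mx2E. Qed.

Lemma band_lawf1 i j f : f < M i j -> band_law i j j f 0 = f.
Proof. by case: i j f => [[|[|i]] Hi] // [[|[|j]] Hj] // [|f]; rewrite mx2E. Qed.

Lemma band_lawA i j k l f g h : f < M i j -> g < M j k -> h < M k l ->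
  band_law i k l (band_law i j k f g) h = band_law i j l f (band_law j k l g h).
Proof.
case: i j k l => [[|[|i]] Hi] // [[|[|j]] Hj] // [[|[|k]] Hk] // [[|[|l]] Hl] //;
  rewrite !mx2E /band_law /=;
  case: f => [|f] Mf; case: g => [|g] Mg; case: h => [|h] Mh //=;
  by rewrite ?pair_codeK1 ?pair_codeK2 ?code_fst_lt ?code_snd_lt.
Qed.

Lemma Cat_nonempty_band : Cat_nonempty M.
Proof.
apply: (Cat_nonempty_of_law _ band_law_lt band_law1f band_lawf1 band_lawA).
by case=> [[|[|i]] Hi] //; rewrite mx2E //=; apply: leq_ltn_trans bc_lt_d.
Qed.
End RectangularBand.

Lemma mx2_relabel_rev a b c d :
  (\matrix_(i, j) mx2 a b c d (rev_ord i) (rev_ord j))%R = mx2 d c b a.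
Proof.
apply/matrixP => i j; rewrite mxE !mx2E.
by case: i => [[|[|i]] Hi]; case: j => [[|[|j]] Hj].
Qed.

Lemma Cat_nonempty_mx2_rev a b c d :
  Cat_nonempty (mx2 a b c d) -> Cat_nonempty (mx2 d c b a).
Proof. by move/(Cat_nonempty_relabel (@rev_ord 2)); rewrite mx2_relabel_rev. Qed.

Lemma mx2_1111 : mx2 1 1 1 1 = const_mx 1.
Proof.
by apply/matrixP => i j; rewrite mx2E mxE; case: (val i) => [|[|]]; case: (val j) => [|[|]].
Qed.

Lemma Cat_nonempty_mx2_gt1 a b c d : 1 < a -> 0 < b -> 0 < c -> 1 < d ->
  Cat_nonempty (mx2 a b c d).
Proof.
move=> a_gt1 b_gt0 c_gt0 d_gt1; apply: Cat_nonempty_absorbing.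
  by case=> [[|[|i]] Hi]; rewrite mx2E.
by case=> [[|[|i]] Hi] [[|[|j]] Hj]; rewrite mx2E //= ltnW.
Qed.

Lemma Cat_nonempty_mx2_1 b c d : Cat_nonempty (mx2 1 b c d) ->
  b * c < d \/ [/\ b = 1, c = 1 & d = 1].
Proof.
case=> C card_C; pose x : 'I_2 := ord0; pose y : 'I_2 := ord_max.
have card_End_x : #|Defs.Hom C x x| = 1 by rewrite card_C mx2E.
have := card_round_trips y card_End_x.
have := @card_End_eq1_of_round_trips _ C x y card_End_x.
rewrite !card_C !mx2E /= mulnC leq_eqVlt => eq_d1 /orP[/eqP bc_d|]; last by left.
right; have d1 := eq_d1 bc_d.
by move: bc_d; rewrite d1 => /eqP; rewrite muln_eq1 => /andP[/eqP -> /eqP ->].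
Qed.

Theorem mainTheorem2 (a b c d : nat) :
  1 <= a -> 1 <= b -> 1 <= c -> 1 <= d ->
  (Cat_nonempty (mx2 a b c d) <->
    [\/ (a = 1 /\ b = 1 /\ c = 1 /\ d = 1),
        (a = 1 /\ b * c < d),
        (d = 1 /\ b * c < a) |
        (1 < a /\ 1 < d)]).
Proof.
move=> a_gt0 b_gt0 c_gt0 d_gt0; split.
- have [-> /Cat_nonempty_mx2_1 [bc_lt_d|[-> -> ->]]|a_gt1] := eqVneq a 1.
  + by apply: Or42.
  + by apply: Or41.
  have [-> /Cat_nonempty_mx2_rev/Cat_nonempty_mx2_1 [cb_lt_a|[_ _ a1]]|d_gt1 _] := eqVneq d 1.
  + by apply: Or43; split; rewrite // mulnC.
  + by rewrite a1 in a_gt1.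
  by apply: Or44; split; rewrite ltn_neqAle eq_sym ?a_gt1 ?d_gt1.
- case=> [[-> [-> [-> ->]]]|[-> bc_lt_d]|[-> bc_lt_a]|[a_gt1 d_gt1]].
  + by rewrite mx2_1111; apply: Cat_nonempty_const1.
  + exact: Cat_nonempty_band.
  + by apply/Cat_nonempty_mx2_rev/Cat_nonempty_band; rewrite // mulnC.
  + exact: Cat_nonempty_mx2_gt1.
Qed.
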